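(* Let $G=(V,E)$ be a finite, simple, connected graph which is locally connected and reflective, and assume $G$ is distance regular with intersection array $(b_0,b_1,\ldots,b_{L-1};c_1=1,\ldots,c_L)$. Then the Ollivier curvature of every edge is $\kappa(x,y)=1+b_0-b_1$. Moreover $G$ is Lichnerowicz sharp, i.e. the smallest positive eigenvalue $\lambda$ of $-\Delta$ satisfies $\lambda=1+b_0-b_1$.
   Context: Locally connected: for every vertex $v$ the subgraph induced on the neighbors of $v$ is connected. $d$ is the combinatorial distance. Distance regular with intersection array $(b_0,\ldots,b_{L-1};c_1,\ldots,c_L)$: $G$ has diameter $L$ and for every $x$ and every $z$ with $d(x,z)=n$, $z$ has $b_n$ neighbors at distance $n+1$ from $x$ and $c_n$ neighbors at distance $n-1$ from $x$ (with the usual convention $b_L=0$). Laplacian $\Delta f(x)=\sum_{y\sim x}(f(y)-f(x))$. Ollivier curvature: $\kappa(x,y)=\inf\{\Delta f(x)-\Delta f(y): f(y)-f(x)=1,\ \max_{u\sim v}|f(u)-f(v)|=1\}$. For adjacent $x\sim y$ let $V_x^y=\{v: d(v,x)<d(v,y)\}$, $V^{xy}=\{v:d(v,x)=d(v,y)\}$. A reflection from $x$ to $y$ is a graph automorphism $\phi$ with $\phi\circ\phi=\mathrm{id}$, $\phi(x)=y$, such that the edges between $V_x^y$ and $V_y^x$ are exactly $\{\{x',\phi(x')\}:x'\in V_x^y\}$ and $\phi$ fixes $V^{xy}$ pointwise. $G$ is reflective if every edge admits a reflection. *)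

From HB Require Import structures.
From mathcomp Require Import all_boot all_order all_algebra.
From mathcomp Require Import boolp classical_sets reals.
Set Implicit Arguments. Unset Strict Implicit. Unset Printing Implicit Defensive.
Import Order.TTheory GRing.Theory Num.Theory.

Section Graphs.
Variable T : finType.
Variable e : rel T.

Definition simple_graph := symmetric e /\ irreflexive e.

Definition graph_connected := forall x y : T, connect e x y.

Definition locally_connected :=
  forall v a b : T, e v a -> e v b ->
    connect [rel u w | [&& e v u, e v w & e u w]] a b.

Fixpoint reach (n : nat) (x y : T) : bool :=
  if n is n'.+1 then reach n' x y || [exists z, reach n' x z && e z y]
  else x == y.

(* combinatorial distance (equals #|T| when y is unreachable from x) *)
Definition dist (x y : T) : nat := find (fun n => reach n x y) (iota 0 #|T|).

(* distance regular with intersection array (b_0..b_{L-1}; c_1..c_L), with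
   b_L = 0 forced by the counting condition at n = L *)
Definition distance_regular (L : nat) (b c : nat -> nat) :=
  [/\ (forall x y, dist x y <= L),
      (exists x y, dist x y = L) &
      forall x z, let n := dist x z in
        #|[set w | e z w & dist x w == n.+1]| = b n /\
        (1 <= n -> #|[set w | e z w & dist x w == n.-1]| = c n)].

Definition Vside (x y : T) : {set T} := [set v | dist v x < dist v y].
Definition Vmid (x y : T) : {set T} := [set v | dist v x == dist v y].

Definition reflection (x y : T) (phi : T -> T) :=
  [/\ (forall u v, e (phi u) (phi v) = e u v),
      (forall u, phi (phi u) = u),
      phi x = y,
      (forall u, u \in Vside x y -> phi u \in Vside y x /\ e u (phi u)) &
      ((forall u w, u \in Vside x y -> w \in Vside y x -> e u w -> w = phi u) /\
       (forall u, u \in Vmid x y -> phi u = u))].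

Definition reflective := forall x y, e x y -> exists phi, reflection x y phi.

Variable R : realType.
Local Open Scope ring_scope.

Definition laplacian (f : T -> R) (x : T) : R := \sum_(y | e x y) (f y - f x).

Definition lip_max (f : T -> R) : R :=
  \big[Num.max/0]_(p : T * T | e p.1 p.2) `|f p.1 - f p.2|.

Local Open Scope classical_set_scope.
Definition ollivier_curvature (x y : T) : R :=
  inf [set r : R | exists f : T -> R,
         [/\ f y - f x = 1, lip_max f = 1 & r = laplacian f x - laplacian f y]].

Definition eigenvalue_negLap (lam : R) :=
  exists f : T -> R, (exists v, f v != 0) /\
    forall v, - laplacian f v = lam * f v.

Definition smallest_pos_eigenvalue (lam : R) :=
  [/\ 0 < lam, eigenvalue_negLap lam &
      forall mu, 0 < mu -> eigenvalue_negLap mu -> lam <= mu].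
End Graphs.

(* For an edge xy with reflection phi, let g be 1 on V_y^x, -1 on V_x^y and 0 on
   V^{xy}; g is antisymmetric under phi. Reindexing the Laplacian at y = phi x
   through phi shows that, for every 1-Lipschitz f with f y - f x = 1, the sum
   defining Lap f x - Lap f y dominates the one defining Lap g x termwise, while
   g/2 attains it: kappa(x,y) = Lap g x = 2 + #(neighbours of x in V^{xy}).
   For any u in V_x^y, distance regularity with c_1 = 1 applied to u and its
   neighbour phi u makes the number of neighbours of u in V^{xy} equal to
   b_0 - b_1 - 1, so Lap g = 1 + b_0 - b_1 on V_x^y and, by antisymmetry,
   -Lap g = (1 + b_0 - b_1) g. Conversely, rescaling an eigenfunction so that its
   largest increment along an edge is 1 and testing the curvature bound on that
   edge shows that every positive eigenvalue is at least 1 + b_0 - b_1. *)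

From HB Require Import structures.
From mathcomp Require Import all_boot all_order all_algebra.
From mathcomp Require Import boolp classical_sets reals.
From mathcomp Require Import lra.
Import Order.TTheory GRing.Theory Num.Theory.
Set Implicit Arguments. Unset Strict Implicit. Unset Printing Implicit Defensive.

Section Distance.
Variables (T : finType) (e : rel T).

Lemma reach_dist n a b : reach e n a b -> (dist e a b <= n)%N.
Proof.
move=> r_ab; rewrite /dist; have [n_lt|n_ge] := ltnP n #|T|.
  rewrite leqNgt; apply/negP => /(before_find 0%N).
  by rewrite nth_iota // add0n r_ab.
by apply: leq_trans (find_size _ _) _; rewrite size_iota.
Qed.

Lemma dist_reach a b : (dist e a b < #|T|)%N -> reach e (dist e a b) a b.
Proof.
rewrite /dist => lt_d.
have : (find (reach e ^~ a ^~ b) (iota 0 #|T|) < size (iota 0 #|T|))%N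
  by rewrite size_iota.
by rewrite -has_find => /(nth_find 0%N); rewrite nth_iota ?add0n.
Qed.

Lemma reach_edge n a z w : reach e n a z -> e z w -> reach e n.+1 a w.
Proof. by move=> r_az e_zw /=; apply/orP; right; apply/existsP; exists z; rewrite r_az.
Qed.

Lemma distxx a : dist e a a = 0%N.
Proof. by apply/eqP; rewrite -leqn0; apply: (@reach_dist 0%N) => /=. Qed.

Lemma dist_eq0 a b : dist e a b = 0%N -> a = b.
Proof.
move=> d0; have : (dist e a b < #|T|)%N by rewrite d0; apply/card_gt0P; exists a.
by move/dist_reach; rewrite d0 => /eqP.
Qed.

Lemma dist_edge a b : irreflexive e -> e a b -> dist e a b = 1%N.
Proof.
move=> e_irr e_ab; apply/eqP; rewrite eqn_leq lt0n; apply/andP; split.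
  by apply: (@reach_dist 1%N); apply: (@reach_edge 0%N a a) => /=.
by apply: contraTneq e_ab => /dist_eq0 ->; rewrite e_irr.
Qed.

Lemma dist1_edge a b : dist e a b = 1%N -> e a b.
Proof.
move=> d1; have a_neq_b : a != b by apply: contra_eqN d1 => /eqP ->; rewrite distxx.
have : (dist e a b < #|T|)%N by rewrite d1; apply/card_gt1P; exists a, b.
move/dist_reach; rewrite d1 /= (negbTE a_neq_b).
by case/existsP => z /andP[/eqP ->].
Qed.

Lemma reach_aut (phi : T -> T) : {mono phi : u v / e u v} -> bijective phi ->
  forall n a b, reach e n (phi a) (phi b) = reach e n a b.
Proof.
move=> phi_mono [psi phiK psiK]; elim=> [|n IH] a b /=.
  by rewrite (inj_eq (can_inj phiK)).
rewrite IH; congr (_ || _); apply/existsP/existsP => -[z].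
  by rewrite -(psiK z) IH phi_mono; exists (psi z).
by rewrite -IH -phi_mono; exists (phi z).
Qed.

Lemma dist_aut (phi : T -> T) : {mono phi : u v / e u v} -> bijective phi ->
  forall a b, dist e (phi a) (phi b) = dist e a b.
Proof. by move=> phi_mono phi_bij a b; apply: eq_find => n; rewrite reach_aut. Qed.

Lemma connect_edge a b : connect e a b -> a != b -> exists z, e a z.
Proof.
case/connectP => -[|z p] /=; first by move=> _ ->; rewrite eqxx.
by case/andP => e_az _ _ _; exists z.
Qed.

End Distance.

Local Open Scope ring_scope.

Lemma inf_eq_min (R : realType) (E : set R) x : E x -> lbound E x -> inf E = x.
Proof.
move=> Ex lb_x; apply/le_anti; rewrite lb_le_inf ?andbT //; last by exists x.
by apply: ge_inf => //; exists x.
Qed.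

Lemma sum_nat_bool (T : finType) (P Q : pred T) :
  (\sum_(i | P i) (Q i : nat) = #|[set i | P i & Q i]|)%N.
Proof.
rewrite -sum1dep_card (big_mkcondr _ _ P Q) /=.
by apply: eq_bigr => i _; case: (Q i).
Qed.

Section Laplacian.
Variables (R : realType) (T : finType) (e : rel T).

Definition lipschitz1 (f : T -> R) := forall u v, e u v -> `|f u - f v| <= 1.

Lemma laplacianZ k (f : T -> R) v :
  laplacian e (fun w => k * f w) v = k * laplacian e f v.
Proof. by rewrite /laplacian mulr_sumr; apply: eq_bigr => w _; rewrite mulrBr. Qed.

Lemma laplacian_aut (phi : T -> T) (f : T -> R) v :
  {mono phi : u w / e u w} -> injective phi ->
  laplacian e (f \o phi) v = laplacian e f (phi v).
Proof.
move=> phi_mono phi_inj; rewrite /laplacian [RHS](reindex_inj phi_inj) /=.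
by apply: eq_bigl => w; rewrite phi_mono.
Qed.

Lemma lip_max_ge (f : T -> R) u v : e u v -> `|f u - f v| <= lip_max e f.
Proof.
exact: (@le_bigmax_cond _ _ _ 0 (u, v) (fun p : T * T => e p.1 p.2)
  (fun p => `|f p.1 - f p.2|)).
Qed.

Lemma lip_max_witness (f : T -> R) : symmetric e -> 0 < lip_max e f ->
  exists u v, e u v /\ f v - f u = lip_max e f.
Proof.
move=> e_sym lip_gt0.
have [[u v] e_uv|no_edge] := pickP (fun p : T * T => e p.1 p.2); last first.
  by move: lip_gt0; rewrite /lip_max big_pred0 ?ltxx.
rewrite /lip_max.
have [[u' v'] /= e_uv' ->] := eq_bigmax (u, v) (fun p : T * T => e p.1 p.2)
  (fun p => `|f p.1 - f p.2|) e_uv (fun p _ => normr_ge0 _).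
have [le_fuv|lt_fvu] := leP (f u') (f v').
  by exists u', v'; rewrite distrC ger0_norm // subr_ge0.
by exists v', u'; rewrite e_sym ger0_norm // subr_ge0 ltW.
Qed.

(* Discrete Lichnerowicz estimate: test the hypothesis on the eigenfunction, rescaled
   along an edge where it increases fastest. *)
Lemma eigenvalue_ge_gap (k mu : R) : symmetric e ->
  (forall x y f, e x y -> f y - f x = 1 -> lipschitz1 f ->
     k <= laplacian e f x - laplacian e f y) ->
  0 < mu -> eigenvalue_negLap e mu -> k <= mu.
Proof.
move=> e_sym gap mu_gt0 [h [[v0 hv0] eig]].
have [lip_gt0|lip_le0] := ltP 0 (lip_max e h); last first.
  have lap0 : laplacian e h v0 = 0.
    rewrite /laplacian big1 // => w e_v0w; apply/eqP; rewrite subr_eq0 eq_sym.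
    by rewrite -subr_eq0 -normr_le0 (le_trans (lip_max_ge h e_v0w)).
  have /eqP := eig v0; rewrite lap0 oppr0 eq_sym mulf_eq0 (negbTE hv0) orbF.
  by rewrite gt_eqF.
have [x [y [e_xy hxy]]] := lip_max_witness e_sym lip_gt0.
set lip := lip_max e h in lip_gt0 hxy.
pose f w := lip^-1 * h w.
have := gap x y f e_xy.
rewrite /f !laplacianZ -!mulrBr hxy mulVf ?gt_eqF //.
have -> : laplacian e h x - laplacian e h y = mu * lip.
  by rewrite -hxy mulrBr; have := eig x; have := eig y; lra.
rewrite mulrCA mulVf ?gt_eqF // mulr1; apply=> // u v e_uv.
rewrite -mulrBr normrM gtr0_norm ?invr_gt0 // ler_pdivrMl // mulr1.
exact: lip_max_ge.
Qed.

End Laplacian.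

Section DistanceRegular.
Variables (T : finType) (e : rel T) (L : nat) (b c : nat -> nat).
Hypotheses (e_irr : irreflexive e) (e_dr : distance_regular e L b c).
Hypothesis c1 : c 1%N = 1%N.

Lemma dr_degree z : #|[set w | e z w]| = b 0%N.
Proof.
case: e_dr => _ _ /(_ z z) /=; rewrite distxx => -[<- _].
apply: eq_card => w; rewrite !inE; case e_zw: (e z w) => //=.
by rewrite dist_edge.
Qed.

(* The neighbours of z lie at distance 0, 1 or 2 from u; there are c_1 = 1 and b_1
   of the first and last kind. *)
Lemma dr_degree_split u z : e u z ->
  b 0%N = (1 + #|[set w | e z w & dist e u w == 1%N]| + b 1%N)%N.
Proof.
move=> e_uz; case: e_dr => _ _ /(_ u z) /=; rewrite dist_edge //.
move=> -[card_up /(_ isT)]; rewrite c1 => card_down.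
rewrite -(dr_degree z) -{1}card_down -card_up -!sum_nat_bool -sum1dep_card -!big_split /=.
apply: eq_bigr => w e_zw.
have : (dist e u w <= 2)%N.
  apply: (@reach_dist _ _ 2%N); apply: reach_edge e_zw.
  by apply: (@reach_edge _ _ 0%N u u) => /=.
by case: (dist e u w) => [|[|[|]]].
Qed.

End DistanceRegular.

Section Reflection.
Variables (R : realType) (T : finType) (e : rel T).

Variant side_spec x y u : bool -> bool -> bool -> Prop :=
  | SideL of u \in Vside e x y : side_spec x y u true false false
  | SideR of u \in Vside e y x : side_spec x y u false true false
  | SideMid of u \in Vmid e x y : side_spec x y u false false true.

Lemma sideP x y u :
  side_spec x y u (u \in Vside e x y) (u \in Vside e y x) (u \in Vmid e x y).
Proof.
by rewrite !inE; case: ltngtP => d; constructor; rewrite inE ?d.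
Qed.

(* Both the extremal test function for kappa(x,y) and the eigenfunction of -Lap. *)
Definition side_sign x y (w : T) : R := (w \in Vside e y x)%:R - (w \in Vside e x y)%:R.

Variables (x y : T) (phi : T -> T).
Hypotheses (e_sym : symmetric e) (e_irr : irreflexive e).
Hypotheses (e_xy : e x y) (phi_refl : reflection e x y phi).

Local Notation A := (Vside e x y).
Local Notation B := (Vside e y x).
Local Notation M := (Vmid e x y).
Local Notation sign := (side_sign x y).

Lemma refl_mono : {mono phi : u v / e u v}. Proof. by case: phi_refl. Qed.
Lemma reflK : involutive phi. Proof. by case: phi_refl. Qed.
Lemma refl_x : phi x = y. Proof. by case: phi_refl. Qed.
Lemma refl_y : phi y = x. Proof. by rewrite -refl_x reflK. Qed.
Lemma refl_VsideL u : u \in A -> phi u \in B.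
Proof. by case: phi_refl => _ _ _ h _ /h[]. Qed.
Lemma refl_edge u : u \in A -> e u (phi u).
Proof. by case: phi_refl => _ _ _ h _ /h[]. Qed.
Lemma refl_nbR u w : u \in A -> w \in B -> e u w -> w = phi u.
Proof. by case: phi_refl => _ _ _ _ [h _]; apply: h. Qed.
Lemma refl_Vmid u : u \in M -> phi u = u.
Proof. by case: phi_refl => _ _ _ _ [_]; apply. Qed.

Lemma refl_VsideR u : u \in B -> phi u \in A.
Proof.
have d := dist_aut refl_mono (inv_bij reflK).
by rewrite !inE => lt_yx; rewrite -(d u y) -(d u x) refl_x refl_y in lt_yx.
Qed.

Lemma x_VsideL : x \in A.
Proof. by rewrite inE distxx dist_edge. Qed.

Lemma side_signL w : w \in A -> sign w = -1.
Proof. by rewrite /side_sign; case: sideP => //= _ _; rewrite sub0r. Qed.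
Lemma side_signR w : w \in B -> sign w = 1.
Proof. by rewrite /side_sign; case: sideP => //= _ _; rewrite subr0. Qed.
Lemma side_signM w : w \in M -> sign w = 0.
Proof. by rewrite /side_sign; case: sideP => //= _ _; rewrite subrr. Qed.

Lemma side_sign_refl w : sign (phi w) = - sign w.
Proof.
case: (sideP x y w) => w_side.
- by rewrite (side_signL w_side) (side_signR (refl_VsideL w_side)) opprK.
- by rewrite (side_signR w_side) (side_signL (refl_VsideR w_side)).
- by rewrite (refl_Vmid w_side) (side_signM w_side) oppr0.
Qed.

Lemma laplacian_refl (f : T -> R) v :
  laplacian e (f \o phi) v = laplacian e f (phi v).
Proof. exact/laplacian_aut/inv_inj/reflK/refl_mono. Qed.

Lemma laplacian_side_sign_refl v : laplacian e sign (phi v) = - laplacian e sign v.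
Proof.
rewrite -laplacian_refl -mulN1r -laplacianZ /laplacian.
by apply: eq_bigr => w _ /=; rewrite !side_sign_refl; lra.
Qed.

Lemma card_nbR u : u \in A -> #|[set w | e u w & w \in B]| = 1%N.
Proof.
move=> u_A; rewrite -(cards1 (phi u)); apply: eq_card => w.
rewrite finset.in_set1 finset.in_set.
apply/andP/eqP => [[e_uw w_B]|->]; first exact: refl_nbR.
by rewrite refl_edge ?refl_VsideL.
Qed.

Lemma laplacian_side_signL u : u \in A ->
  laplacian e sign u = (2 + #|[set w | e u w & w \in M]|)%:R.
Proof.
move=> u_A.
have -> : (2 + #|[set w | e u w & w \in M]|)%N =
    (\sum_(w | e u w) ((w \in B) * 2 + (w \in M)))%N.
  by rewrite big_split -big_distrl /= !sum_nat_bool card_nbR.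
rewrite natr_sum /laplacian (side_signL u_A); apply: eq_bigr => w _.
by rewrite /side_sign; case: sideP => _ /=; lra.
Qed.

Lemma laplacian_diff_refl (f : T -> R) :
  laplacian e f x - laplacian e f y = \sum_(w | e x w) (f w - f (phi w) + (f y - f x)).
Proof.
rewrite -{1}refl_x -laplacian_refl /laplacian -sumrB.
by apply: eq_bigr => w _ /=; rewrite refl_x; lra.
Qed.

Lemma laplacian_side_sign_le_gap (f : T -> R) : f y - f x = 1 -> lipschitz1 e f ->
  laplacian e sign x <= laplacian e f x - laplacian e f y.
Proof.
move=> f_xy f_lip; rewrite laplacian_diff_refl f_xy /laplacian.
apply: ler_sum => w e_xw; rewrite (side_signL x_VsideL) opprK lerD2r.
case: (sideP x y w) => w_side.
- rewrite (side_signL w_side); have := f_lip _ _ (refl_edge w_side).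
  by rewrite ler_norml => /andP[].
- by rewrite (side_signR w_side) (refl_nbR x_VsideL w_side e_xw) refl_x refl_y f_xy.
- by rewrite (refl_Vmid w_side) (side_signM w_side) subrr.
Qed.

Lemma ollivier_curvature_refl : ollivier_curvature e R x y = laplacian e sign x.
Proof.
have y_B : y \in B by rewrite -{1}refl_x refl_VsideL ?x_VsideL.
have sign_range w : -1 <= sign w <= 1 by rewrite /side_sign; case: sideP => _ /=; lra.
apply: inf_eq_min => [|_ [f [f_xy f_lip ->]]]; last first.
  by apply: laplacian_side_sign_le_gap => // u v e_uv; rewrite -f_lip lip_max_ge.
exists (fun w => 2^-1 * sign w); split.
- by rewrite -mulrBr (side_signR y_B) (side_signL x_VsideL); lra.
- apply/le_anti/andP; split.
    apply: bigmax_le => // -[u v] _ /=; rewrite ler_norml.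
    by have := sign_range u; have := sign_range v; move=> /andP[? ?] /andP[? ?]; lra.
  have := lip_max_ge (fun w => 2^-1 * sign w) e_xy.
  rewrite /= (side_signR y_B) (side_signL x_VsideL).
  by rewrite (_ : 2^-1 * -1 - 2^-1 * 1 = -1 :> R) ?normrN ?normr1 //; lra.
- by rewrite !laplacianZ; have := laplacian_side_sign_refl x; rewrite refl_x; lra.
Qed.

Lemma side_sign_eigen lam : (forall u, u \in A -> laplacian e sign u = lam) ->
  forall v, - laplacian e sign v = lam * sign v.
Proof.
move=> lap_A v; case: (sideP x y v) => v_side.
- by rewrite (lap_A v v_side) (side_signL v_side) mulrN1.
- rewrite -{1}[v]reflK laplacian_side_sign_refl lap_A ?refl_VsideR //.
  by rewrite (side_signR v_side) mulr1 opprK.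
- have := laplacian_side_sign_refl v.
  by rewrite (refl_Vmid v_side) (side_signM v_side) mulr0; lra.
Qed.

Lemma nb_refl_dist1 u : u \in A ->
  [set w | e (phi u) w & dist e u w == 1%N] = [set w | e u w & w \in M].
Proof.
move=> u_A; apply: eq_finset => w /=.
apply/andP/andP => [[e_phiu_w /eqP/dist1_edge e_uw]|[e_uw w_M]]; last first.
  by rewrite -(refl_Vmid w_M) refl_mono e_uw (refl_Vmid w_M) dist_edge.
split=> //; case: (sideP x y w) => // w_side.
- have e_w_phiu : e w (phi u) by rewrite e_sym.
  have /(can_inj reflK) u_eq_w := refl_nbR w_side (refl_VsideL u_A) e_w_phiu.
  by move: e_uw; rewrite u_eq_w e_irr.
- by move: e_phiu_w; rewrite -(refl_nbR u_A w_side e_uw) e_irr.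
Qed.

Section DistanceRegularReflection.
Variables (L : nat) (b c : nat -> nat).
Hypotheses (e_dr : distance_regular e L b c) (c1 : c 1%N = 1%N).

Lemma laplacian_side_signL_dr u : u \in A ->
  laplacian e sign u = 1 + (b 0%N)%:R - (b 1%N)%:R.
Proof.
move=> u_A; rewrite (laplacian_side_signL u_A).
rewrite (dr_degree_split e_irr e_dr c1 (refl_edge u_A)).
by rewrite nb_refl_dist1 // !natrD; lra.
Qed.

End DistanceRegularReflection.

End Reflection.

Theorem theorem2p13 (R : realType) (T : finType) (e : rel T)
  (L : nat) (b c : nat -> nat) :
  simple_graph e -> graph_connected e ->
  locally_connected e -> reflective e ->
  (1 <= L)%N -> distance_regular e L b c -> c 1%N = 1%N ->
  (forall x y, e x y ->
     ollivier_curvature e R x y = 1 + (b 0%N)%:R - (b 1%N)%:R) /\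
  smallest_pos_eigenvalue e (1 + (b 0%N)%:R - (b 1%N)%:R : R).
Proof.
move=> [e_sym e_irr] e_conn _ e_refl L_gt0 e_dr c1.
have lap_sign_x x y phi : e x y -> reflection e x y phi ->
    laplacian e (side_sign R e x y) x = 1 + (b 0%N)%:R - (b 1%N)%:R.
  move=> e_xy phi_refl.
  exact: (laplacian_side_signL_dr R e_sym e_irr phi_refl e_dr c1 (x_VsideL e_irr e_xy)).
split=> [x y e_xy|].
  have [phi phi_refl] := e_refl x y e_xy.
  by rewrite (ollivier_curvature_refl R e_irr e_xy phi_refl) (lap_sign_x x y phi).
have [x [y e_xy]] : exists x y, e x y.
  case: e_dr => _ [x0 [y0 d_L]] _.
  have [|y e_x0y] := connect_edge (e_conn x0 y0); last by exists x0, y.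
  by apply: contraTneq L_gt0 => x0_eq; rewrite -d_L x0_eq distxx.
have [phi phi_refl] := e_refl x y e_xy.
have x_A := x_VsideL e_irr e_xy.
split.
- by rewrite -(lap_sign_x x y phi) // (laplacian_side_signL R phi_refl x_A) ltr0n.
- exists (side_sign R e x y); split.
    by exists x; rewrite (side_signL R x_A) oppr_eq0 oner_eq0.
  apply: (side_sign_eigen phi_refl).
  exact: (laplacian_side_signL_dr R e_sym e_irr phi_refl e_dr c1).
- move=> mu mu_gt0; apply: eigenvalue_ge_gap => // x' y' f e_xy' f_xy f_lip.
  have [phi' phi'_refl] := e_refl x' y' e_xy'.
  rewrite -(lap_sign_x x' y' phi') //.
  exact: (laplacian_side_sign_le_gap e_irr e_xy' phi'_refl f_xy f_lip).
Qed.
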